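(* The bipartite graph $G$ has a perfect matching. Moreover, for every maximum-weight perfect matching $M^*$ of $G$, the induced allocation $X$ is a complete allocation of all real items in which every real item is given to an agent that values it positively, and $X$ is Pareto optimal.
   Context: Setting: $n$ agents, $m$ real items $\mathcal M$, restricted additive valuations: there are values $v(g)>0$ with $v_{i,g}\in\{0,v(g)\}$ and $v_i(S)=\sum_{g\in S}v_{i,g}$; every real item is valued positively by at least one agent. Let $u_1>u_2>\dots>u_t$ be the distinct values in $\{v(g):g\in\mathcal M\}$ and $\mathcal M_f=\{g:v(g)=u_f\}$. Add a set $\mathcal M_d$ of $mn-m$ dummy items valued $0$ by all agents. The bipartite graph $G$ has left side $A=\{a_g: g\in\mathcal M\cup\mathcal M_d\}$ ($mn$ vertices) and right side $B=\{b_{(i,c)}: i\in[n], c\in[m]\}$; the set $\mathcal N_c=\{b_{(i,c)}:i\in[n]\}$ is called bucket $c$. Edges: for each real $g\in\mathcal M_f$, each agent $i$ with $v_{i,g}>0$ and each $c\in[m]$, an edge $(a_g,b_{(i,c)})$ of weight $-m^{t-f}\cdot c$; for each dummy $g$ and all $i,c$, an edge $(a_g,b_{(i,c)})$ of weight $0$; no other edges. The allocation induced by a perfect matching $M$ is $X_i=\{g\in\mathcal M: a_g \text{ matched in } M \text{ to some } b_{(i,c)}\}$. An integral allocation $X$ is Pareto optimal if no integral allocation $Y$ has $v_i(Y_i)\ge v_i(X_i)$ for all $i$ with strict inequality for some $i$. *)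

From HB Require Import structures.
From mathcomp Require Import all_boot all_order all_algebra.
Set Implicit Arguments.
Unset Strict Implicit.
Unset Printing Implicit Defensive.
Import Order.TTheory GRing.Theory Num.Theory.
Local Open Scope ring_scope.

(* Agents are 'I_n, real items are 'I_m.  [v g] is the value v(g) of item g,
   [val i g] is v_{i,g}.  Bucket c in [m] is represented by k : 'I_m with c = k.+1. *)
Section Defs.
Variables (R : realDomainType) (n m : nat) (v : 'I_m -> R) (val : 'I_n -> 'I_m -> R).

(* left side A: real items (inl g) and the m*n - m dummy items (inr d) *)
Definition LeftV := ('I_m + 'I_(m * n - m))%type.
(* right side B: b_(i,c), i agent, c = k.+1 bucket *)
Definition RightV := ('I_n * 'I_m)%type.

(* u_1 > u_2 > ... > u_t : the distinct values, in decreasing order *)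
Definition distinct_vals : seq R :=
  sort (fun x y => y <= x) (undup [seq v g | g <- enum 'I_m]).
Definition tval : nat := size distinct_vals.
(* f such that v(g) = u_f (1-indexed) *)
Definition fidx (g : 'I_m) : nat := (index (v g) distinct_vals).+1.

Definition edge (a : LeftV) (b : RightV) : bool :=
  match a with
  | inl g => 0 < val b.1 g
  | inr _ => true
  end.

Definition weight (a : LeftV) (b : RightV) : int :=
  match a with
  | inl g => - ((m ^ (tval - fidx g) * (b.2 : nat).+1)%N)%:Z
  | inr _ => 0
  end.

Definition is_perfect_matching (M : {set LeftV * RightV}) : Prop :=
  [/\ forall e, e \in M -> edge e.1 e.2,
      forall a : LeftV, #|[set b | (a, b) \in M]| = 1%N
    & forall b : RightV, #|[set a | (a, b) \in M]| = 1%N].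

Definition mweight (M : {set LeftV * RightV}) : int := \sum_(e in M) weight e.1 e.2.

Definition is_max_weight_pm (M : {set LeftV * RightV}) : Prop :=
  is_perfect_matching M /\
  forall M', is_perfect_matching M' -> mweight M' <= mweight M.

Definition induced (M : {set LeftV * RightV}) (i : 'I_n) : {set 'I_m} :=
  [set g | [exists k : 'I_m, ((inl g : LeftV), (i, k)) \in M]].

Definition bundle_val (i : 'I_n) (S : {set 'I_m}) : R := \sum_(g in S) val i g.

Definition is_allocation (X : 'I_n -> {set 'I_m}) : Prop :=
  forall i j, i != j -> [disjoint X i & X j].

Definition is_complete (X : 'I_n -> {set 'I_m}) : Prop :=
  forall g, exists i, g \in X i.

Definition pareto_optimal (X : 'I_n -> {set 'I_m}) : Prop :=
  is_allocation X /\
  ~ (exists Y : 'I_n -> {set 'I_m}, is_allocation Y /\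
       (forall i, bundle_val i (X i) <= bundle_val i (Y i)) /\
       (exists i, bundle_val i (X i) < bundle_val i (Y i))).

End Defs.

From HB Require Import structures.
From mathcomp Require Import all_boot all_order all_algebra.
Import Order.TTheory GRing.Theory Num.Theory.
Set Implicit Arguments.
Unset Strict Implicit.
Local Open Scope ring_scope.

(* Under restricted additive valuations, every agent values an
   item g at most v(g), so the utilitarian welfare of any allocation is at
   most the sum of all v(g), and an allocation that hands every item to an
   agent valuing it positively reaches exactly this bound.  A welfare-maximal
   allocation is Pareto optimal (a Pareto improvement would strictly raise the
   welfare).  So it suffices that the allocation induced by ANY perfect
   matching of G is complete, disjoint and gives items only to agents valuing
   them: each left vertex a_g is matched to exactly one b_(i,c), which is an
   edge, i.e. v_{i,g} > 0.  In particular this holds for a maximum-weight one.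
   Existence of a perfect matching: match a_g to b_(i_g, g) for an agent i_g
   valuing g, and the mn - m dummy items bijectively to the remaining
   mn - m right vertices. *)

Definition welfare (R : realDomainType) (n m : nat) (val : 'I_n -> 'I_m -> R)
    (X : 'I_n -> {set 'I_m}) : R :=
  \sum_i bundle_val val i (X i).

Lemma welfare_max_pareto_optimal (R : realDomainType) (n m : nat)
    (val : 'I_n -> 'I_m -> R) (X : 'I_n -> {set 'I_m}) :
  is_allocation X ->
  (forall Y, is_allocation Y -> welfare val Y <= welfare val X) ->
  pareto_optimal val X.
Proof.
move=> allocX Xmax; split=> // -[Y [allocY [Yge [i0 Ygt]]]].
have : welfare val X < welfare val Y.
  rewrite /welfare (bigD1 i0) //= [X in _ < X](bigD1 i0) //=.
  by apply: ltr_leD => //; apply: ler_sum => i _.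
by rewrite ltNge Xmax.
Qed.

Section RestrictedAdditive.
Variables (R : realDomainType) (n m : nat) (v : 'I_m -> R) (val : 'I_n -> 'I_m -> R).
Hypothesis v_pos : forall g, 0 < v g.
Hypothesis val_restricted : forall i g, val i g = 0 \/ val i g = v g.

Lemma val_ge0 i g : 0 <= val i g.
Proof. by case: (val_restricted i g) => ->; [|apply: ltW]. Qed.

Lemma val_le i g : val i g <= v g.
Proof. by case: (val_restricted i g) => ->; [apply: ltW|]. Qed.

Lemma val_pos_eq i g : 0 < val i g -> val i g = v g.
Proof. by case: (val_restricted i g) => // ->; rewrite ltxx. Qed.

Lemma welfare_by_items (Y : 'I_n -> {set 'I_m}) :
  welfare val Y = \sum_g \sum_(i | g \in Y i) val i g.
Proof.
rewrite /welfare /bundle_val.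
under eq_bigr do rewrite big_mkcond.
by rewrite exchange_big; apply: eq_bigr => g _; rewrite [RHS]big_mkcond.
Qed.

(* In an allocation, an item belongs to at most one agent, so it contributes
   at most v(g) to the welfare. *)
Lemma item_contribution_le (Y : 'I_n -> {set 'I_m}) g :
  is_allocation Y -> \sum_(i | g \in Y i) val i g <= v g.
Proof.
move=> allocY; case: (pickP (fun i => g \in Y i)) => [i0 gY0|noY].
  rewrite (bigD1 i0) //= big1 ?addr0 ?val_le // => j /andP [gYj ji0].
  by rewrite (disjointFr (allocY _ _ ji0) gYj) in gY0.
by rewrite big_pred0 // ltW.
Qed.

Lemma welfare_le (Y : 'I_n -> {set 'I_m}) :
  is_allocation Y -> welfare val Y <= \sum_g v g.
Proof.
by move=> allocY; rewrite welfare_by_items; apply: ler_sum => g _;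
  apply: item_contribution_le.
Qed.

Lemma welfare_complete_positive (X : 'I_n -> {set 'I_m}) :
  is_complete X -> (forall i g, g \in X i -> 0 < val i g) ->
  \sum_g v g <= welfare val X.
Proof.
move=> complX posX; rewrite welfare_by_items; apply: ler_sum => g _.
have [i gXi] := complX g.
rewrite (bigD1 i) //= val_pos_eq ?posX // lerDl.
by apply: sumr_ge0 => j _; apply: val_ge0.
Qed.

Lemma complete_positive_pareto_optimal (X : 'I_n -> {set 'I_m}) :
  is_allocation X -> is_complete X -> (forall i g, g \in X i -> 0 < val i g) ->
  pareto_optimal val X.
Proof.
move=> allocX complX posX; apply: welfare_max_pareto_optimal => // Y allocY.
exact: le_trans (welfare_le allocY) (welfare_complete_positive complX posX).
Qed.

End RestrictedAdditive.

Section InducedAllocation.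
Variables (R : realDomainType) (n m : nat) (val : 'I_n -> 'I_m -> R).
Variable M : {set LeftV n m * RightV n m}.
Hypothesis M_pm : is_perfect_matching val M.

Lemma matched_left (a : LeftV n m) : exists b, [set b0 | (a, b0) \in M] = [set b].
Proof. by case: M_pm => _ left1 _; apply/cards1P; rewrite left1. Qed.

Lemma matched_left_unique (a : LeftV n m) b1 b2 :
  (a, b1) \in M -> (a, b2) \in M -> b1 = b2.
Proof.
have [b Mab] := matched_left a => ab1 ab2.
have : b1 \in [set b0 | (a, b0) \in M] by rewrite inE.
have : b2 \in [set b0 | (a, b0) \in M] by rewrite inE.
by rewrite Mab !inE => /eqP -> /eqP ->.
Qed.

Lemma induced_complete : is_complete (induced M).
Proof.
move=> g; have [[i k] Mg] := matched_left (inl g).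
exists i; rewrite inE; apply/existsP; exists k.
have : (i, k) \in [set (i, k)] by rewrite inE.
by rewrite -Mg inE.
Qed.

Lemma induced_allocation : is_allocation (induced M).
Proof.
move=> i j ij; rewrite disjoint_subset; apply/subsetP => g; rewrite !inE.
move=> /existsP [k Mgik]; apply/negP => /existsP [k' Mgjk'].
by case: (matched_left_unique Mgik Mgjk') => ji; rewrite ji eqxx in ij.
Qed.

(* Items are only induced along edges of G. *)
Lemma induced_positive i g : g \in induced M i -> 0 < val i g.
Proof.
case: M_pm => edgeM _ _; rewrite inE => /existsP [k Mgik].
exact: (edgeM _ Mgik).
Qed.

End InducedAllocation.

Section PerfectMatchingExists.
Variables (R : realDomainType) (n m : nat) (val : 'I_n -> 'I_m -> R).
Hypothesis valued : forall g, exists i, 0 < val i g.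

Definition owner (g : 'I_m) : 'I_n := xchoose (valued g).

(* The right vertices not used by the real items: b_(i,c) with i <> owner c. *)
Definition free_right : {set RightV n m} := [set b | b.1 != owner b.2].

Lemma card_free_right : #|free_right| = (m * n - m)%N.
Proof.
have used : ~: free_right = [set (owner k, k) | k : 'I_m].
  apply/setP => b; rewrite !inE negbK; apply/eqP/imsetP.
    by move=> E; exists b.2 => //; case: b E => /= x y ->.
  by case=> k _ ->.
have inj_used : injective (fun k : 'I_m => (owner k, k)) by move=> x y [].
have := cardsC free_right; rewrite used card_imset // card_prod !card_ord => E.
by rewrite mulnC -E addnK.
Qed.

Definition dummy_partner (d : 'I_(m * n - m)) : RightV n m :=
  enum_val (cast_ord (esym card_free_right) d).

Definition partner (a : LeftV n m) : RightV n m :=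
  match a with inl g => (owner g, g) | inr d => dummy_partner d end.

Definition partner_matching : {set LeftV n m * RightV n m} :=
  [set e | e.2 == partner e.1].

Lemma dummy_partner_free d : dummy_partner d \in free_right.
Proof. exact: enum_valP. Qed.

Lemma partner_inj : injective partner.
Proof.
case=> [g|d] [g'|d'] /=.
- by case=> _ ->.
- by move=> E; have := dummy_partner_free d'; rewrite -E inE /= eqxx.
- by move=> E; have := dummy_partner_free d; rewrite E inE /= eqxx.
- by move/enum_val_inj/cast_ord_inj => ->.
Qed.

Lemma partner_surj b : exists a, partner a = b.
Proof.
case: (boolP (b \in free_right)) => free_b.
  exists (inr (cast_ord card_free_right (enum_rank_in free_b b))).
  by rewrite /= /dummy_partner cast_ordK enum_rankK_in.
exists (inl b.2); move: free_b; rewrite inE negbK => /eqP E.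
by rewrite /= -E; case: b {E}.
Qed.

Lemma partner_matching_perfect : is_perfect_matching val partner_matching.
Proof.
split.
- move=> e; rewrite inE => /eqP ->; case: e.1 => [g|d] //=.
  exact: (xchooseP (valued g)).
- move=> a; have -> : [set b | (a, b) \in partner_matching] = [set partner a].
    by apply/setP => b; rewrite !inE.
  exact: cards1.
- move=> b; have [a0 <-] := partner_surj b.
  have -> : [set a | (a, partner a0) \in partner_matching] = [set a0].
    by apply/setP => a; rewrite !inE /=; apply/eqP/eqP => [/esym/partner_inj|->].
  exact: cards1.
Qed.

End PerfectMatchingExists.

Theorem mainTheorem8 (R : realDomainType) (n m : nat) (v : 'I_m -> R)
    (val : 'I_n -> 'I_m -> R) :
  (forall g, 0 < v g) ->
  (forall i g, val i g = 0 \/ val i g = v g) ->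
  (forall g, exists i, 0 < val i g) ->
  (exists M, @is_perfect_matching R n m val M) /\
  (forall M, @is_max_weight_pm R n m v val M ->
     [/\ @is_complete n m (@induced n m M), @is_allocation n m (@induced n m M),
         (forall i g, g \in @induced n m M i -> 0 < val i g)
       & @pareto_optimal R n m val (@induced n m M)]).
Proof.
move=> v_pos val_restricted valued; split.
  by exists (partner_matching valued); apply: partner_matching_perfect.
move=> M [M_pm _].
have complX := induced_complete M_pm.
have allocX := induced_allocation M_pm.
have posX := induced_positive M_pm.
by split=> //; apply: (complete_positive_pareto_optimal v_pos val_restricted).
Qed.
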